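(* Let $G=(g_1,\dots,g_k)\in\mathbb{N}_0^k$ be telescopic with $g_1>0$ and $c(G)=(c_2,\dots,c_k)$. Suppose that for some $n\in\{1,\dots,k\}$, $g_n$ is an $\mathbb{N}_0$-linear combination of the entries $g_i$, $i\ne n$. Then either $g_n\in\langle g_1,\dots,g_{n-1}\rangle$ (interpreted as $\{0\}$ when $n=1$), or $g_n=c_mg_m$ for some $m$ with $n<m\le k$.
   Context: For $G=(g_1,\dots,g_k)\in\mathbb{N}_0^k$, $\langle\cdot\rangle$ denotes the set of $\mathbb{N}_0$-linear combinations. Let $G_i=(g_1,\dots,g_i)$, $d_i=\gcd(G_i)$, and (assuming $g_1>0$) $c(G)=(c_2,\dots,c_k)$ with $c_j=d_{j-1}/d_j$. $G$ is telescopic if $c_jg_j\in\langle G_{j-1}\rangle$ for all $2\le j\le k$. *)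

(* A tuple G = (g_1,...,g_k) is a sequence gs : seq nat with k = size gs;
   entries are 1-indexed: g_i = nth 0 gs (i-1). *)
From mathcomp Require Import all_boot.
Set Implicit Arguments. Unset Strict Implicit. Unset Printing Implicit Defensive.

Definition in_semigroup (s : seq nat) (x : nat) : Prop :=
  exists a : nat -> nat, x = \sum_(i < size s) a i * nth 0 s i.

Definition gen (gs : seq nat) (i : nat) : nat := nth 0 gs i.-1.

Definition gprefix (gs : seq nat) (i : nat) : seq nat := take i gs.

Definition dgcd (gs : seq nat) (i : nat) : nat := \big[gcdn/0]_(x <- gprefix gs i) x.

Definition cseq (gs : seq nat) (j : nat) : nat := dgcd gs j.-1 %/ dgcd gs j.

Definition telescopic (gs : seq nat) : Prop :=
  forall j, 2 <= j <= size gs -> in_semigroup (gprefix gs j.-1) (cseq gs j * gen gs j).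

From mathcomp Require Import all_boot.

Set Implicit Arguments.
Unset Strict Implicit.
Unset Printing Implicit Defensive.

(* Write g_n as a combination avoiding g_n and eliminate the
   largest index M > n occurring in it.  The gcd d_{M-1} of g_1, ..., g_{M-1}
   divides g_n and all other terms, hence divides a_M g_M; this forces c_M to
   divide a_M.  By telescopy c_M g_M is a combination of g_1, ..., g_{M-1}.
   If g_n does not occur in it, substituting lowers the largest index.  If it
   does, then g_n <= c_M g_M <= a_M g_M <= g_n, so g_n = c_M g_M.  When no index
   above n is left, g_n lies in <g_1, ..., g_{n-1}>. *)

Lemma dvdn_divn_gcd a g D : 0 < g -> D %| a * g -> D %/ gcdn D g %| a.
Proof.
move=> g_gt0 D_ag; have d_gt0 : 0 < gcdn D g by rewrite gcdn_gt0 g_gt0 orbT.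
rewrite -(dvdn_pmul2r d_gt0) divnK ?dvdn_gcdl // muln_gcdr.
by rewrite dvdn_gcd dvdn_mull // mulnC.
Qed.

Lemma leq_term_sum (F : nat -> nat) M j : j < M -> F j <= \sum_(i < M) F i.
Proof. by move=> jM; rewrite (bigD1 (Ordinal jM)) //= leq_addr. Qed.

Section Combinations.

Variable gs : seq nat.

Lemma in_semigroup_take M x : M <= size gs ->
  in_semigroup (take M gs) x <->
  exists a : nat -> nat, x = \sum_(i < M) a i * nth 0 gs i.
Proof.
move=> M_le; rewrite /in_semigroup size_take_min (minn_idPl M_le).
by split=> -[a ->]; exists a; apply: eq_bigr => i _; rewrite nth_take.
Qed.

Lemma dgcd_dvd_nth M i : i < M -> dgcd gs M %| nth 0 gs i.
Proof.
move=> iM; have [i_lt|i_ge] := ltnP i (size gs); last by rewrite nth_default.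
rewrite -(nth_take 0 iM) /dgcd /gprefix.
have : i < size (take M gs) by rewrite size_take_min leq_min iM.
elim: (take M gs) i {iM i_lt} => [|y s IHs] [|i] //= i_lt_s; rewrite big_cons.
  exact: dvdn_gcdl.
exact: dvdn_trans (dvdn_gcdr _ _) (IHs i i_lt_s).
Qed.

Lemma cseqS M : M < size gs ->
  cseq gs M.+1 = dgcd gs M %/ gcdn (dgcd gs M) (nth 0 gs M).
Proof.
move=> M_lt; rewrite /cseq /dgcd /gprefix (take_nth 0 M_lt).
by rewrite -cats1 big_cat big_seq1.
Qed.

(* [comb_avoid j M x]: x is an N_0-combination of the 0-indexed entries
   g_0, ..., g_{M-1} in which g_j has coefficient 0. *)
Definition comb_avoid (j M x : nat) : Prop :=
  exists2 a : nat -> nat, a j = 0 & x = \sum_(i < M) a i * nth 0 gs i.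

Lemma comb_avoidD j M x y :
  comb_avoid j M x -> comb_avoid j M y -> comb_avoid j M (x + y).
Proof.
move=> [a a_j ->] [b b_j ->]; exists (fun i => a i + b i).
  by rewrite a_j b_j.
by rewrite -big_split; apply: eq_bigr => i _; rewrite mulnDl.
Qed.

Lemma comb_avoidMn j M k x : comb_avoid j M x -> comb_avoid j M (k * x).
Proof.
move=> [a a_j ->]; exists (fun i => k * a i); first by rewrite a_j muln0.
by rewrite big_distrr; apply: eq_bigr => i _ /=; rewrite mulnA.
Qed.

Lemma comb_avoid_widen j M N x : M <= N -> comb_avoid j M x -> comb_avoid j N x.
Proof.
move=> MN [a a_j ->]; exists (fun i => if i < M then a i else 0).
  by rewrite a_j if_same.
rewrite (big_ord_widen _ (fun i => a i * nth 0 gs i) MN) big_mkcond.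
by apply: eq_bigr => i _; case: ifP.
Qed.

Lemma comb_avoidSr j M x : comb_avoid j M.+1 x ->
  exists2 y, comb_avoid j M y &
  exists2 k, x = y + k * nth 0 gs M & M = j -> k = 0.
Proof.
move=> [a a_j ->]; rewrite big_ord_recr /=.
by exists (\sum_(i < M) a i * nth 0 gs i); [exists a | exists (a M) => // ->].
Qed.

Hypothesis gs_telescopic : telescopic gs.

Lemma telescopic_nth M : 0 < M -> M < size gs ->
  exists b : nat -> nat,
  cseq gs M.+1 * nth 0 gs M = \sum_(i < M) b i * nth 0 gs i.
Proof.
move=> M_gt0 M_lt; apply/in_semigroup_take; first exact: ltnW.
by apply: gs_telescopic; rewrite ltnS M_gt0.
Qed.

Lemma comb_avoid_exchange j M : j < M -> M < size gs ->
  comb_avoid j M.+1 (nth 0 gs j) ->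
  comb_avoid j M (nth 0 gs j) \/ nth 0 gs j = cseq gs M.+1 * nth 0 gs M.
Proof.
move=> jM M_lt /comb_avoidSr[y y_avoid [k gj_eq _]].
have [kg_eq0|kg_gt0] := posnP (k * nth 0 gs M).
  by left; rewrite gj_eq kg_eq0 addn0.
have [k_gt0 gM_gt0] : 0 < k /\ 0 < nth 0 gs M.
  by move: kg_gt0; rewrite muln_gt0 => /andP.
set c := cseq gs M.+1.
have c_dvd_k : c %| k.
  rewrite /c cseqS //; apply: dvdn_divn_gcd => //.
  have d_dvd_y : dgcd gs M %| y.
    have [a _ ->] := y_avoid.
    by apply: dvdn_sum => i _; rewrite dvdn_mull ?dgcd_dvd_nth.
  by rewrite -(dvdn_addr _ d_dvd_y) -gj_eq dgcd_dvd_nth.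
case/dvdnP: c_dvd_k => q k_eq.
have q_gt0 : 0 < q by move: k_gt0; rewrite k_eq muln_gt0 => /andP[].
have [b cg_eq] := telescopic_nth (leq_ltn_trans (leq0n j) jM) M_lt.
have [b_j0|b_j_gt0] := posnP (b j).
  left; rewrite gj_eq k_eq -mulnA.
  by apply/comb_avoidD/comb_avoidMn => //; exists b; rewrite // -cg_eq.
right; apply/eqP; rewrite eqn_leq; apply/andP; split.
  rewrite cg_eq; apply: leq_trans (leq_term_sum (fun i => b i * nth 0 gs i) jM).
  exact: leq_pmull.
rewrite [leqRHS]gj_eq k_eq -mulnA; apply: leq_trans (leq_addl _ _).
exact: leq_pmull.
Qed.

Lemma comb_avoid_reduce j M : M <= size gs -> comb_avoid j M (nth 0 gs j) ->
  comb_avoid j j (nth 0 gs j) \/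
  exists2 m, j < m < size gs & nth 0 gs j = cseq gs m.+1 * nth 0 gs m.
Proof.
elim: M => [|M IHM] M_le gj_avoid.
  by left; apply: comb_avoid_widen gj_avoid.
have [Mj|jM|Mj] := ltngtP M j.
- by left; apply: comb_avoid_widen gj_avoid.
- have [gj_avoidM|gj_eq] := comb_avoid_exchange jM M_le gj_avoid.
    exact: IHM (ltnW M_le) gj_avoidM.
  by right; exists M; rewrite ?jM.
- subst M; apply: IHM (ltnW M_le) _.
  have [y y_avoid [k -> k_eq0]] := comb_avoidSr gj_avoid.
  by rewrite k_eq0 // addn0.
Qed.

End Combinations.

Theorem mainTheorem4 (gs : seq nat) (n : nat) :
  telescopic gs ->
  0 < gen gs 1 ->
  1 <= n <= size gs ->
  (exists a : nat -> nat,
      gen gs n = \sum_(i < size gs | i.+1 != n) a i * nth 0 gs i) ->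
  in_semigroup (gprefix gs n.-1) (gen gs n) \/
  (exists m, n < m <= size gs /\ gen gs n = cseq gs m * gen gs m).
Proof.
move=> tel _; case: n => // j /= j_lt [a gj_eq].
have gj_avoid : comb_avoid gs j (size gs) (nth 0 gs j).
  exists (fun i => if i == j then 0 else a i); first by rewrite eqxx.
  rewrite [LHS]gj_eq big_mkcond; apply: eq_bigr => i _.
  by rewrite eqSS; case: eqP.
have [[b _ gj_comb]|[m /andP[jm m_lt] gj_eq']] :=
  comb_avoid_reduce tel (leqnn _) gj_avoid.
- by left; apply/in_semigroup_take; [exact: ltnW | exists b].
- by right; exists m.+1; rewrite ltnS jm m_lt.
Qed.
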